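(* Let $X,Y$ be binary variables and suppose the experimental quantities $P(y_x),P(y_{x'})$ and observational quantities $P(y),P(x,y),P(x,y'),P(x',y),P(x',y')$ are estimated by sample frequencies from $m$ experimental samples and $n$ observational samples. If $\sqrt{\tfrac{1}{m}}+\sqrt{\tfrac{1}{n}}\le \tfrac{5}{196}$, then the margin of error of each of the estimated bounds of PNS, $$\max\{0,\;P(y_x)-P(y_{x'}),\;P(y)-P(y_{x'}),\;P(y_x)-P(y)\}\le \mathrm{PNS}\le \min\{P(y_x),\;P(y'_{x'}),\;P(x,y)+P(x',y'),\;P(y_x)-P(y_{x'})+P(x,y')+P(x',y)\},$$ in a $95\%$ confidence interval is at most $0.05$. In particular, if $m=n$, then $m=n=6147$ experimental and observational samples suffice to obtain margin of error at most $0.05$ for the bounds of PNS in a $95\%$ confidence interval.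
   Context: Counterfactual notation: $y_x$ denotes the event ''$Y$ would be $y$ had $X$ been $x$'', and similarly $y_{x'}$, $y'_{x'}$; $\mathrm{PNS}=P(y_x,y'_{x'})$. For a probability $p$ estimated by the frequency $\hat p$ from $k$ samples (experimental quantities from the $m$ experimental samples, observational quantities from the $n$ observational samples), its margin of error in a $1-\alpha$ confidence interval is $z_{1-\alpha/2}\sqrt{\hat p(1-\hat p)/k}$ where $z_{1-\alpha/2}$ is the standard normal quantile (for $95\%$, $z_{0.975}=1.96$), and the margin of error of a sum or difference of such estimates is bounded by the sum of their margins of error. *)

From Stdlib Require Import Reals Lra.
Open Scope R_scope.

(* z_{0.975} = 1.96, the standard normal quantile for a 95% confidence interval
   (fixed numerically, as in the paper's context). *)
Definition z975 : R := 196 / 100.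

Definition freq (c k : nat) : R := INR c / INR k.

Definition moe (p : R) (k : nat) : R := z975 * sqrt (p * (1 - p) / INR k).

(* Margins of error (sum of the margins of error of the estimated constituents)
   of the terms of the estimated PNS bounds, for binary X, Y.
   All margins of error of the lower bound
     max{0, P(y_x)-P(y_x'), P(y)-P(y_x'), P(y_x)-P(y)}
   and of the upper bound
     min{P(y_x), P(y'_x'), P(x,y)+P(x',y'), P(y_x)-P(y_x')+P(x,y')+P(x',y)}
   are at most `bound` (the constant 0 has margin of error 0). *)
Definition pns_bounds_moe_le (m n : nat) (bound : R) : Prop :=
  forall (cyx cyx' cy cxy cxy' cx'y cx'y' : nat),
    (cyx <= m)%nat -> (cyx' <= m)%nat ->
    (cy <= n)%nat -> (cxy <= n)%nat -> (cxy' <= n)%nat ->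
    (cx'y <= n)%nat -> (cx'y' <= n)%nat ->
    let pyx := freq cyx m in
    let pyx' := freq cyx' m in
    let py := freq cy n in
    let pxy := freq cxy n in
    let pxy' := freq cxy' n in
    let px'y := freq cx'y n in
    let px'y' := freq cx'y' n in
    0 <= bound /\
    moe pyx m + moe pyx' m <= bound /\
    moe py n + moe pyx' m <= bound /\
    moe pyx m + moe py n <= bound /\
    moe pyx m <= bound /\
    moe (1 - pyx') m <= bound /\
    moe pxy n + moe px'y' n <= bound /\
    moe pyx m + moe pyx' m + moe pxy' n + moe px'y n <= bound.

(* Since p (1 - p) <= 1/4, every margin of error from k samples is at most
   (z/2) sqrt(1/k).  Each term of the two PNS bounds combines at most two
   experimental and two observational estimates, so all their margins are at
   most z (sqrt(1/m) + sqrt(1/n)) <= 1.96 * 5/196 = 0.05.  For m = n = 6147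
   this applies because (392/5)^2 = 6146.56 <= 6147. *)
From Stdlib Require Import Reals Lra Lia.
Open Scope R_scope.

Lemma mul_one_minus_le_quarter (p : R) : p * (1 - p) <= / 4.
Proof. assert (0 <= (p - / 2) ^ 2) by apply pow2_ge_0. nra. Qed.

Lemma Rinv_INR_ge0 (k : nat) : 0 <= / INR k.
Proof.
  destruct k as [|k].
  - simpl; rewrite Rinv_0; lra.
  - left; apply Rinv_pos, lt_0_INR; lia.
Qed.

Lemma sqrt_inv4 : sqrt (/ 4) = / 2.
Proof. rewrite <- (sqrt_square (/ 2)) by lra; f_equal; field. Qed.

(* No positivity hypothesis on k: for k = 0 both sides vanish, as / 0 = 0. *)
Lemma moe_le_sqrt_inv (p : R) (k : nat) :
  moe p k <= z975 / 2 * sqrt (1 / INR k).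
Proof.
  unfold moe.
  assert (variance_le : p * (1 - p) / INR k <= / 4 * (1 / INR k)).
  { unfold Rdiv; rewrite Rmult_1_l.
    apply Rmult_le_compat_r; [apply Rinv_INR_ge0 | apply mul_one_minus_le_quarter]. }
  apply sqrt_le_1_alt in variance_le.
  rewrite sqrt_mult_alt, sqrt_inv4 in variance_le by lra.
  unfold z975; lra.
Qed.

Lemma pns_bounds_moe_le_sqrt_inv (m n : nat) :
  pns_bounds_moe_le m n (z975 * (sqrt (1 / INR m) + sqrt (1 / INR n))).
Proof.
  intros cyx cyx' cy cxy cxy' cx'y cx'y' _ _ _ _ _ _ _; cbv zeta.
  pose proof (sqrt_pos (1 / INR m)); pose proof (sqrt_pos (1 / INR n)).
  pose proof (moe_le_sqrt_inv (freq cyx m) m).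
  pose proof (moe_le_sqrt_inv (freq cyx' m) m).
  pose proof (moe_le_sqrt_inv (1 - freq cyx' m) m).
  pose proof (moe_le_sqrt_inv (freq cy n) n).
  pose proof (moe_le_sqrt_inv (freq cxy n) n).
  pose proof (moe_le_sqrt_inv (freq cxy' n) n).
  pose proof (moe_le_sqrt_inv (freq cx'y n) n).
  pose proof (moe_le_sqrt_inv (freq cx'y' n) n).
  unfold z975 in *; repeat split; lra.
Qed.

Lemma pns_bounds_moe_le_weaken (m n : nat) (b b' : R) :
  b <= b' -> pns_bounds_moe_le m n b -> pns_bounds_moe_le m n b'.
Proof.
  intros le_bb' hb cyx cyx' cy cxy cxy' cx'y cx'y' ? ? ? ? ? ? ?.
  destruct (hb cyx cyx' cy cxy cxy' cx'y cx'y') as (? & ? & ? & ? & ? & ? & ? & ?);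
    auto.
  repeat split; lra.
Qed.

Lemma sqrt_inv_6147_le : sqrt (1 / INR 6147) <= 5 / 392.
Proof.
  rewrite INR_IZR_INZ, <- (sqrt_square (5 / 392)) by lra.
  apply sqrt_le_1_alt; simpl; lra.
Qed.

Theorem corollary1 :
  (forall m n : nat, (0 < m)%nat -> (0 < n)%nat ->
     sqrt (1 / INR m) + sqrt (1 / INR n) <= 5 / 196 ->
     pns_bounds_moe_le m n (5 / 100))
  /\ pns_bounds_moe_le 6147 6147 (5 / 100).
Proof.
  assert (sufficient : forall m n : nat,
             sqrt (1 / INR m) + sqrt (1 / INR n) <= 5 / 196 ->
             pns_bounds_moe_le m n (5 / 100)).
  { intros m n small.
    refine (pns_bounds_moe_le_weaken _ _ _ _ _ (pns_bounds_moe_le_sqrt_inv m n)).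
    unfold z975; lra. }
  split.
  - intros m n _ _; apply sufficient.
  - apply sufficient; pose proof sqrt_inv_6147_le; lra.
Qed.
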